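(* Let $\alpha,\beta>0$ and let $\mathrm{sgn}$ denote the sign function. (i) If $\tau_0=\tau_1+\tau_2$ and $k_0=k_1+k_2\neq0$ (with $\tau_i\in\mathbb{R}$, $k_i\in\mathbb{Z}$), then $$\max\{|\tau_0-\alpha k_0^2|,\ |\tau_1-\alpha k_1^2|,\ ||\tau_2|-\beta|k_2||\}\gtrsim|\alpha|\,|k_2|\,\Big|k_0+k_1-\tfrac{\beta}{\alpha}S_1\Big|,\quad S_1=\mathrm{sgn}(\tau_2k_2).$$ (ii) If $\tau_0=\tau_1-\tau_2$ and $k_0=k_1-k_2\neq0$, then $$\max\{||\tau_0|-\beta|k_0||,\ |\tau_1-\alpha k_1^2|,\ |\tau_2-\alpha k_2^2|\}\gtrsim|\alpha|\,|k_0|\,\Big|k_1+k_2-\tfrac{\beta}{\alpha}S_2\Big|,\quad S_2=\mathrm{sgn}(\tau_0k_0).$$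
   Context: $A\gtrsim B$ means $A\ge cB$ for an absolute constant $c>0$. *)

From Stdlib Require Import Reals ZArith.
Open Scope R_scope.

Definition sgn (x : R) : R :=
  match Rlt_dec 0 x with
  | left _ => 1
  | right _ => match Rlt_dec x 0 with left _ => -1 | right _ => 0 end
  end.

From Stdlib Require Import Reals ZArith Lra.
Open Scope R_scope.

(* Write [P], [Q] for the two Schrödinger modulations and [t], [k] for the
   frequencies of the wave-type factor.  Their difference [P - Q] equals
   [t - alpha k (k' + k'')], so
   [alpha k (k' + k'' - beta/alpha sgn(t k)) = (t - beta k sgn(t k)) - (P - Q)].
   When [t k <> 0], [k sgn(t k)] has the sign of [t], so the first term is
   [sgn t (|t| - beta |k|)], bounded by the wave modulation.  Hence the
   left-hand side is at most the sum of the three modulations, and [c = 1/3]. *)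

Lemma sgn_pos (x : R) : 0 < x -> sgn x = 1.
Proof. unfold sgn; intro Hx; destruct (Rlt_dec 0 x); lra. Qed.

Lemma sgn_neg (x : R) : x < 0 -> sgn x = -1.
Proof.
  unfold sgn; intro Hx.
  destruct (Rlt_dec 0 x); [lra|]; destruct (Rlt_dec x 0); lra.
Qed.

Lemma sgn_0 : sgn 0 = 0.
Proof.
  unfold sgn; destruct (Rlt_dec 0 0); [lra|]; destruct (Rlt_dec 0 0); lra.
Qed.

Lemma Rabs_sub_mult_sgn_le (b t k : R) :
  Rabs (t - b * k * sgn (t * k)) <= Rabs (Rabs t - b * Rabs k).
Proof.
  destruct (Rtotal_order (t * k) 0) as [Hneg | [Hzero | Hpos]].
  - rewrite sgn_neg by exact Hneg.
    destruct (Rlt_or_le t 0) as [Ht | Ht].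
    + rewrite (Rabs_left t), (Rabs_pos_eq k) by nra.
      rewrite <- Rabs_Ropp; apply Req_le; f_equal; ring.
    + rewrite (Rabs_pos_eq t), (Rabs_left k) by nra.
      apply Req_le; f_equal; ring.
  - rewrite Hzero, sgn_0, Rmult_0_r, Rminus_0_r.
    destruct (Rmult_integral t k Hzero) as [-> | ->].
    + rewrite Rabs_R0; apply Rabs_pos.
    + rewrite Rabs_R0, Rmult_0_r, Rminus_0_r, Rabs_Rabsolu; apply Rle_refl.
  - rewrite sgn_pos by exact Hpos.
    destruct (Rlt_or_le t 0) as [Ht | Ht].
    + rewrite (Rabs_left t), (Rabs_left k) by nra.
      rewrite <- Rabs_Ropp; apply Req_le; f_equal; ring.
    + rewrite (Rabs_pos_eq t), (Rabs_pos_eq k) by nra.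
      apply Req_le; f_equal; ring.
Qed.

Lemma resonance_bound (a b t k s A : R) :
  a <> 0 -> a * k * s = t - A ->
  Rabs a * Rabs k * Rabs (s - b / a * sgn (t * k))
    <= Rabs A + Rabs (Rabs t - b * Rabs k).
Proof.
  intros Ha Hs.
  rewrite <- !Rabs_mult.
  replace (a * k * (s - b / a * sgn (t * k)))
    with (- A + (t - b * k * sgn (t * k)))
    by (replace A with (t - a * k * s) by lra; field; exact Ha).
  eapply Rle_trans; [apply Rabs_triang|].
  rewrite Rabs_Ropp.
  apply Rplus_le_compat_l, Rabs_sub_mult_sgn_le.
Qed.

Lemma Rabs_sub_le (x y : R) : Rabs (x - y) <= Rabs x + Rabs y.
Proof. rewrite <- (Rabs_Ropp y); apply Rabs_triang. Qed.

Lemma Rplus3_le_3_Rmax3 (x y z : R) : x + y + z <= 3 * Rmax x (Rmax y z).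
Proof.
  pose proof (Rmax_l x (Rmax y z)); pose proof (Rmax_r x (Rmax y z)).
  pose proof (Rmax_l y z); pose proof (Rmax_r y z); lra.
Qed.

Theorem lemma4p4 :
  exists c : R, 0 < c /\
  forall alpha beta : R, 0 < alpha -> 0 < beta ->
  (* (i) *)
  (forall (t0 t1 t2 : R) (k0 k1 k2 : Z),
     t0 = t1 + t2 -> k0 = (k1 + k2)%Z -> k0 <> 0%Z ->
     Rmax (Rabs (t0 - alpha * IZR k0 ^ 2))
       (Rmax (Rabs (t1 - alpha * IZR k1 ^ 2))
             (Rabs (Rabs t2 - beta * Rabs (IZR k2))))
     >= c * Rabs alpha * Rabs (IZR k2)
          * Rabs (IZR k0 + IZR k1 - beta / alpha * sgn (t2 * IZR k2)))
  /\
  (* (ii) *)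
  (forall (t0 t1 t2 : R) (k0 k1 k2 : Z),
     t0 = t1 - t2 -> k0 = (k1 - k2)%Z -> k0 <> 0%Z ->
     Rmax (Rabs (Rabs t0 - beta * Rabs (IZR k0)))
       (Rmax (Rabs (t1 - alpha * IZR k1 ^ 2))
             (Rabs (t2 - alpha * IZR k2 ^ 2)))
     >= c * Rabs alpha * Rabs (IZR k0)
          * Rabs (IZR k1 + IZR k2 - beta / alpha * sgn (t0 * IZR k0))).
Proof.
  exists (1/3); split; [lra|]; intros alpha beta Ha _.
  assert (Ha0 : alpha <> 0) by lra.
  split.
  - intros t0 t1 t2 k0 k1 k2 Ht Hk _.
    set (P := t0 - alpha * IZR k0 ^ 2); set (Q := t1 - alpha * IZR k1 ^ 2).
    assert (Hres : alpha * IZR k2 * (IZR k0 + IZR k1) = t2 - (P - Q))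
      by (unfold P, Q; rewrite Ht, Hk, plus_IZR; ring).
    pose proof (resonance_bound alpha beta _ _ _ _ Ha0 Hres).
    pose proof (Rabs_sub_le P Q).
    pose proof (Rplus3_le_3_Rmax3 (Rabs P) (Rabs Q) (Rabs (Rabs t2 - beta * Rabs (IZR k2)))).
    lra.
  - intros t0 t1 t2 k0 k1 k2 Ht Hk _.
    set (P := t1 - alpha * IZR k1 ^ 2); set (Q := t2 - alpha * IZR k2 ^ 2).
    assert (Hres : alpha * IZR k0 * (IZR k1 + IZR k2) = t0 - (P - Q))
      by (unfold P, Q; rewrite Ht, Hk, minus_IZR; ring).
    pose proof (resonance_bound alpha beta _ _ _ _ Ha0 Hres).
    pose proof (Rabs_sub_le P Q).
    pose proof (Rplus3_le_3_Rmax3 (Rabs (Rabs t0 - beta * Rabs (IZR k0))) (Rabs P) (Rabs Q)).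
    lra.
Qed.
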